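(* Let $m,p,n$ be positive integers with $p\mid m$ and $n>1$. If $(T_1,\ldots,T_n)$ is a $\boldsymbol\Theta_n$-contraction, then $(\gamma_1T_1,\ldots,\gamma_{n-1}T_{n-1})$ is a $\Gamma_{n-1}$-contraction, where $\gamma_j=\frac{n-j}{n}$ for $j=1,\ldots,n-1$.
   Context: Put $q=m/p$. $G(m,p,n)$ is the group of $n\times n$ monomial matrices whose nonzero entries are $m$-th roots of unity and whose product of nonzero entries is an $(m/p)$-th root of unity. Let $s_i$ be the $i$-th elementary symmetric polynomial; $\theta_i(z)=s_i(z_1^m,\ldots,z_n^m)$ for $1\le i\le n-1$, $\theta_n(z)=(z_1\cdots z_n)^q$, $\boldsymbol\theta=(\theta_1,\dots,\theta_n)$, $\boldsymbol\Theta_n=\boldsymbol\theta(\mathbb D^n)$, $\overline{\boldsymbol\Theta}_n=\boldsymbol\theta(\overline{\mathbb D}^n)$. A commuting tuple $(T_1,\dots,T_n)$ of bounded operators on a Hilbert space is a $\boldsymbol\Theta_n$-contraction if $\|f(T_1,\dots,T_n)\|\le\sup_{\overline{\boldsymbol\Theta}_n}|f|$ for every polynomial $f\in\mathbb C[z_1,\dots,z_n]$. $\Gamma_k=\boldsymbol s(\overline{\mathbb D}^k)$ is the closed symmetrized polydisc, and a $\Gamma_k$-contraction is a commuting $k$-tuple $S$ with $\|f(S)\|\le\sup_{\Gamma_k}|f|$ for all polynomials $f$ in $k$ variables. *)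

From HB Require Import structures.
From mathcomp Require Import all_boot all_order all_algebra.
From mathcomp Require Import all_classical all_reals all_analysis.
From mathcomp Require Import complex.
From mathcomp Require mpoly.
Set Implicit Arguments. Unset Strict Implicit. Unset Printing Implicit Defensive.
Import Order.TTheory GRing.Theory Num.Theory.
Local Open Scope ring_scope.
Local Open Scope classical_set_scope.

Definition hilbert_ip (R : realType) (H : normedModType R[i])
    (ip : H -> H -> R[i]) : Prop :=
  [/\ forall a x y z, ip (a *: x + y) z = a * ip x z + ip y z,
      forall x y, ip y x = (ip x y)^*
    & forall x, ip x x = `|x| ^+ 2].

Definition bounded_op (R : realType) (H : normedModType R[i]) (A : H -> H) : Prop :=
  (forall a x y, A (a *: x + y) = a *: A x + A y) /\
  exists c : R[i], forall x, `|A x| <= c * `|x|.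

Definition commuting_tuple (R : realType) (H : normedModType R[i]) (k : nat)
    (T : 'I_k -> H -> H) : Prop :=
  (forall i, bounded_op (T i)) /\ (forall i j x, T i (T j x) = T j (T i x)).

Definition mono_op (R : realType) (H : normedModType R[i]) (k : nat)
    (T : 'I_k -> H -> H) (a : mpoly.multinom k) : H -> H :=
  foldr (fun i g => iter (mpoly.fun_of_multinom a i) (T i) \o g) id (enum 'I_k).

Definition peval (R : realType) (H : normedModType R[i]) (k : nat)
    (f : mpoly.mpoly k R[i]) (T : 'I_k -> H -> H) (x : H) : H :=
  \sum_(a <- mpoly.msupp f) mpoly.mcoeff a f *: mono_op T a x.

Definition cpolydisc (R : realType) (k : nat) : set ('I_k -> R[i]) :=
  [set z | forall i, `|z i| <= 1].

(* K-contraction: ||f(T)|| <= sup_K |f| for every polynomial f, written as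
   ||f(T) x|| <= M ||x|| for every upper bound M of |f| on K. *)
Definition K_contraction (R : realType) (H : normedModType R[i]) (k : nat)
    (K : set ('I_k -> R[i])) (T : 'I_k -> H -> H) : Prop :=
  commuting_tuple T /\
  forall (f : mpoly.mpoly k R[i]) (M : R[i]),
    (forall w, K w -> `|mpoly.meval w f| <= M) ->
    forall x, `|peval f T x| <= M * `|x|.

Definition esym (R : realType) (k : nat) (i : nat) (w : 'I_k -> R[i]) : R[i] :=
  \sum_(S : {set 'I_k} | #|S| == i) \prod_(j in S) w j.

Definition symmap (R : realType) (k : nat) (z : 'I_k -> R[i]) : 'I_k -> R[i] :=
  fun j => esym j.+1 z.

Definition Gamma (R : realType) (k : nat) : set ('I_k -> R[i]) :=
  @symmap R k @` @cpolydisc R k.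

(* theta = (theta_1,...,theta_n), index j : 'I_n stands for theta_{j+1} *)
Definition theta (R : realType) (m p n : nat) (z : 'I_n -> R[i]) : 'I_n -> R[i] :=
  fun j => if (j.+1 < n)%N then esym j.+1 (fun i => z i ^+ m)
           else (\prod_i z i) ^+ (m %/ p).

Definition Theta_bar (R : realType) (m p n : nat) : set ('I_n -> R[i]) :=
  @theta R m p n @` @cpolydisc R n.

(* gamma_{j+1} = (n - (j+1)) / n *)
Definition gammaj (R : realType) (n : nat) (j : nat) : R[i] :=
  (n - j.+1)%N%:R / n%:R.

(* For z in the closed polydisc put w_i = z_i^m and P = prod_i (X - w_i).
   By Gauss-Lucas the roots u_1, ..., u_{n-1} of P'/n lie in the closed unit
   disc, and comparing coefficients of P'/n = prod_j (X - u_j) gives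
   s_j(u) = (n-j)/n s_j(w) = gamma_j theta_j(z).  So z |-> (gamma_j theta_j(z))_j
   maps the polydisc into Gamma_{n-1}.  For a polynomial f in n-1 variables,
   f(gamma_1 T_1, ..., gamma_{n-1} T_{n-1}) = g(T) with g = f o (gamma_j X_j),
   and sup over Theta_n of |g| is at most sup over Gamma_{n-1} of |f|. *)

From Pilot Require Import Defs.
From mathcomp Require Import all_boot all_order all_algebra.
From mathcomp Require Import complex mpoly ring.
From mathcomp Require Import all_classical all_reals all_analysis.
Import Order.TTheory GRing.Theory Num.Theory.
Local Open Scope ring_scope.

Lemma deriv_prod (R : comNzRingType) (I : eqType) (s : seq I) (F : I -> {poly R}) :
  uniq s ->
  (\prod_(i <- s) F i)^`() = \sum_(i <- s) (F i)^`() * \prod_(j <- s | j != i) F j.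
Proof.
elim: s => [|a s IH] /=; first by rewrite !big_nil derivC.
move=> /andP [a_notin_s uniq_s]; rewrite !big_cons derivM IH // eqxx /=.
congr (_ + _).
  congr (_ * _); rewrite [LHS]big_seq_cond [RHS]big_seq_cond; apply: eq_bigl => j.
  by case j_in_s: (j \in s) => //=; symmetry; apply: contraNneq a_notin_s => <-.
rewrite mulr_sumr; apply: eq_big_seq => i i_in_s; rewrite big_cons.
have -> : (a != i) by apply: contraNneq a_notin_s => ->.
by rewrite mulrCA.
Qed.

Lemma horner_deriv_prod_XsubC (F : fieldType) (I : finType) (w : I -> F) (u : F) :
  (forall i, u != w i) ->
  (\prod_i ('X - (w i)%:P))^`().[u] = (\prod_i (u - w i)) * \sum_i (u - w i)^-1.
Proof.
move=> u_neq_w; rewrite deriv_prod ?index_enum_uniq // horner_sum mulr_sumr.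
apply: eq_bigr => i _; rewrite derivXsubC mul1r horner_prod [in RHS](bigD1 i) //=.
rewrite mulrAC divff ?subr_eq0 // mul1r.
by apply: eq_bigr => j _; rewrite hornerXsubC.
Qed.

Lemma norm_barycenter_le1 (C : numDomainType) (I : finType) (c w : I -> C) (u : C) :
  (forall i, 0 <= c i) -> 0 < \sum_i c i -> (forall i, `|w i| <= 1) ->
  u * \sum_i c i = \sum_i c i * w i -> `|u| <= 1.
Proof.
move=> c_ge0 sum_gt0 w_le1 u_bary.
rewrite -(ler_pM2r sum_gt0) mul1r -[X in _ * X <= _](ger0_norm (ltW sum_gt0)).
rewrite -normrM u_bary.
apply: (le_trans (ler_norm_sum _ _ _)); apply: ler_sum => i _.
by rewrite normrM ger0_norm // ler_piMr.
Qed.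

Lemma gauss_lucas_disc {C : numClosedFieldType} {k : nat} (w : 'I_k.+1 -> C) (u : C) :
  (forall i, `|w i| <= 1) -> root (\prod_i ('X - (w i)%:P))^`() u -> `|u| <= 1.
Proof.
move=> w_le1.
case: (boolP [exists i, u == w i]) => [/existsP [i /eqP ->] // | /existsPn u_neq_w].
have prod_neq0 : \prod_i (u - w i) != 0 by apply/prodf_neq0 => i _; rewrite subr_eq0.
rewrite rootE horner_deriv_prod_XsubC // mulf_eq0 (negbTE prod_neq0) /= => /eqP.
(* Conjugating sum_i 1 / (u - w_i) = 0 exhibits u as an average of the w_i
   with the positive weights |u - w_i|^-2. *)
move=> /(congr1 Num.conj_op); rewrite rmorph0 rmorph_sum /= => sum_conj.
pose c i := `|u - w i| ^- 2.
have c_gt0 i : 0 < c i by rewrite invr_gt0 exprn_gt0 // normr_gt0 subr_eq0.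
apply: (@norm_barycenter_le1 _ _ c w) => //.
- by move=> i; apply: ltW.
- by rewrite (bigD1 ord0) //= ltr_pwDl // sumr_ge0 // => i _; apply: ltW.
- apply/eqP; rewrite mulr_sumr -subr_eq0 -sumrB -[X in _ == X]sum_conj; apply/eqP.
  apply: eq_bigr => i _.
  by rewrite invC_norm rmorphM /= conjCK fmorphV rmorphXn /= conj_normC mulrC mulrBr mulrC.
Qed.

Lemma coef_prod_XsubC_mesym {C : idomainType} {k : nat} (w : 'I_k -> C) (i : 'I_k.+1) :
  (\prod_j ('X - (w j)%:P))`_(k - i) = (-1) ^+ i * (mesym k C i).@[w].
Proof.
have tnth_w : tnth [tuple w j | j < k] = w by apply/funext => j; rewrite tnth_mktuple.
by have := mroots_coeff [tuple w j | j < k] i; rewrite big_tuple tnth_w.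
Qed.

Lemma scaled_deriv_prod_XsubC_splits {C : closedFieldType} {k : nat} (w : 'I_k.+1 -> C) :
  k.+1%:R != 0 :> C ->
  exists u : k.-tuple C,
    k.+1%:R^-1 *: (\prod_i ('X - (w i)%:P))^`() = \prod_(x <- u) ('X - x%:P).
Proof.
move=> k1_neq0; set P := \prod_i _; set Q := _ *: _.
have size_P : size P = k.+2.
  by rewrite size_prod_XsubC [index_enum _]unlock -enumT size_enum_ord.
have Q_k : Q`_k = 1.
  have /monicP : P \is monic by apply: monic_prod_XsubC.
  rewrite lead_coefE size_P => lead_P.
  by rewrite coefZ coef_deriv lead_P mulVf.
have size_Q : size Q = k.+1.
  apply: anti_leq; apply/andP; split; last first.
    by rewrite ltnNge; apply/negP => /(nth_default 0); rewrite Q_k; apply/eqP/oner_neq0.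
  rewrite (leq_trans (size_scale_leq _ _)) // -ltnS -size_P lt_size_deriv //.
  by rewrite -size_poly_eq0 size_P.
have [r Q_split] := closed_field_poly_normal Q.
rewrite lead_coefE size_Q Q_k scale1r in Q_split.
have size_r : size r == k by rewrite -eqSS -size_Q Q_split size_prod_XsubC.
by exists (Tuple size_r).
Qed.

Lemma mesym_scaled_deriv_roots {C : fieldType} {k : nat}
    (w : 'I_k.+1 -> C) (u : k.-tuple C) :
  k.+1%:R^-1 *: (\prod_i ('X - (w i)%:P))^`() = \prod_(x <- u) ('X - x%:P) ->
  forall j : 'I_k,
    (mesym k C j.+1).@[tnth u] = (k - j)%:R / k.+1%:R * (mesym k.+1 C j.+1).@[w].
Proof.
move=> u_split j; have j_lt : (j.+1 < k.+1)%N by rewrite ltnS.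
have := mroots_coeff u (Ordinal j_lt); rewrite /= -u_split coefZ coef_deriv subnSK //.
have := coef_prod_XsubC_mesym w (Ordinal (ltnW j_lt : j.+1 < k.+2)%N).
rewrite /= subSS => -> coef_eq.
apply: (mulfI (negbT (signr_eq0 _ j.+1))); rewrite -coef_eq mulrnAr -mulr_natl; ring.
Qed.

Lemma critical_points_mesym {C : numClosedFieldType} {k : nat} (w : 'I_k.+1 -> C) :
  (forall i, `|w i| <= 1) ->
  exists2 u : 'I_k -> C, (forall j, `|u j| <= 1) &
    forall j : 'I_k,
      (mesym k C j.+1).@[u] = (k - j)%:R / k.+1%:R * (mesym k.+1 C j.+1).@[w].
Proof.
move=> w_le1; have k1_neq0 : k.+1%:R != 0 :> C by rewrite pnatr_eq0.
have [u u_split] := scaled_deriv_prod_XsubC_splits w k1_neq0.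
exists (tnth u); last exact: mesym_scaled_deriv_roots.
move=> j; apply: (gauss_lucas_disc _ _ w_le1).
have : root (\prod_(x <- u) ('X - x%:P)) (tnth u j) by rewrite root_prod_XsubC mem_tnth.
by rewrite -u_split rootZ ?invr_eq0.
Qed.

Lemma iter_commute {U : Type} (A B : U -> U) (e : nat) :
  (forall x, A (B x) = B (A x)) -> forall x, A (iter e B x) = iter e B (A x).
Proof. by move=> AB; elim: e => [|e IH] x //=; rewrite AB IH. Qed.

Lemma foldr_comp_commute {I U : Type} (F : I -> U -> U) (A : U -> U) (l : seq I) :
  (forall i x, A (F i x) = F i (A x)) ->
  forall x,
    A (foldr (fun i g => F i \o g) id l x) = foldr (fun i g => F i \o g) id l (A x).
Proof. by move=> AF; elim: l => [|i l IH] x //=; rewrite AF IH. Qed.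

Section PolynomialCalculus.
Variables (R : realType) (H : normedModType R[i]).
Implicit Types (x : H).

Lemma peval_sum_supp {n : nat} (T : 'I_n -> H -> H) (f : {mpoly R[i][n]})
    (s : seq 'X_{1..n}) x :
  uniq s -> {subset msupp f <= s} -> peval f T x = \sum_(a <- s) f@_a *: mono_op T a x.
Proof.
move=> s_uniq supp_s; rewrite /peval [RHS](bigID (mem (msupp f))) /=.
rewrite [X in _ = _ + X]big1 ?addr0; last first.
  by move=> a; rewrite mcoeff_msupp negbK => /eqP ->; rewrite scale0r.
rewrite -[RHS]big_filter; apply: perm_big; apply: uniq_perm; rewrite ?filter_uniq //.
by move=> a; rewrite mem_filter andb_idr // => /supp_s.
Qed.

Lemma pevalDZ {n : nat} (T : 'I_n -> H -> H) c (f g : {mpoly R[i][n]}) x :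
  peval (c *: f + g) T x = c *: peval f T x + peval g T x.
Proof.
pose s := undup (msupp f ++ msupp g ++ msupp (c *: f + g)).
rewrite !(@peval_sum_supp _ T _ s) ?undup_uniq //.
2-4: by move=> a a_in; rewrite mem_undup !mem_cat a_in ?orbT.
rewrite scaler_sumr -big_split /=; apply: eq_bigr => a _.
by rewrite mcoeffD mcoeffZ scalerDl scalerA.
Qed.

Lemma peval0 {n : nat} (T : 'I_n -> H -> H) x : peval 0 T x = 0.
Proof. by rewrite /peval msupp0 big_nil. Qed.

Lemma pevalZ {n : nat} (T : 'I_n -> H -> H) c (f : {mpoly R[i][n]}) x :
  peval (c *: f) T x = c *: peval f T x.
Proof. by rewrite -[c *: f]addr0 pevalDZ peval0 addr0. Qed.

Lemma pevalX {n : nat} (T : 'I_n -> H -> H) (a : 'X_{1..n}) x :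
  peval 'X_[a] T x = mono_op T a x.
Proof. by rewrite /peval msuppX big_seq1 mcoeffX eqxx scale1r. Qed.

Lemma peval1 {n : nat} (T : 'I_n -> H -> H) x : peval 1 T x = x.
Proof.
rewrite -mpolyX0 pevalX /mono_op.
by elim: (enum 'I_n) => [|i l IH] //=; rewrite mnm0E.
Qed.

Lemma pevalXU {n : nat} (T : 'I_n -> H -> H) (j : 'I_n) x : peval 'X_j T x = T j x.
Proof.
rewrite pevalX /mono_op.
have : j \in enum 'I_n by rewrite mem_enum.
have : uniq (enum 'I_n) by apply: enum_uniq.
elim: (enum 'I_n) => [|i l IH] //= /andP [i_notin_l l_uniq].
rewrite in_cons mnm1E.
case: (eqVneq j i) i_notin_l => [-> i_notin_l _ | j_neq_i _ /= j_in_l].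
  congr (T i _); elim: l i_notin_l {IH l_uniq} => [|i' l' IH'] //=.
  by rewrite in_cons => /norP [i_neq_i' i_notin_l']; rewrite mnm1E (negbTE i_neq_i') IH'.
by rewrite IH.
Qed.

Section CommutingLinear.
Variables (n : nat) (T : 'I_n -> H -> H).
Implicit Types (f g : {mpoly R[i][n]}) (a b : 'X_{1..n}).
Hypothesis T_linear : forall i, linear (T i).
Hypothesis T_commute : forall i j x, T i (T j x) = T j (T i x).

Lemma linear_mono_op a : linear (mono_op T a).
Proof.
rewrite /mono_op; elim: (enum 'I_n) => [|i l IH] c x y //=.
by rewrite IH; elim: (a i) => [|e IHe] //=; rewrite IHe T_linear.
Qed.

Lemma mono_op0 a : mono_op T a 0 = 0.
Proof.
exact: (GRing.nmod_morphism_semilinear (GRing.semilinear_linear (linear_mono_op a))).1.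
Qed.

Lemma mono_opD a b x : mono_op T (a + b) x = mono_op T a (mono_op T b x).
Proof.
rewrite /mono_op; elim: (enum 'I_n) x => [|i l IH] x //=.
rewrite mnmDE iterD IH; congr (iter _ _ _).
apply: (foldr_comp_commute (fun j => iter (a j) (T j))) => j y.
by apply: iter_commute => z; symmetry; apply: iter_commute => w; apply: T_commute.
Qed.

Lemma pevalXM a g x : peval ('X_[a] * g) T x = mono_op T a (peval g T x).
Proof.
elim/mpolyind: g => [|c b g _ _ IH]; first by rewrite mulr0 !peval0 mono_op0.
by rewrite mulrDr -scalerAr -mpolyXD !pevalDZ IH !pevalX mono_opD linear_mono_op.
Qed.

Lemma pevalM f g x : peval (f * g) T x = peval f T (peval g T x).
Proof.
elim/mpolyind: f => [|c a f _ _ IH]; first by rewrite mul0r !peval0.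
by rewrite mulrDl -scalerAl !pevalDZ IH pevalXM pevalX.
Qed.

Lemma pevalXn f e x : peval (f ^+ e) T x = iter e (peval f T) x.
Proof. by elim: e x => [|e IH] x; rewrite ?expr0 ?peval1 // exprS pevalM IH. Qed.

Lemma peval_prod {I : Type} (l : seq I) (F : I -> {mpoly R[i][n]}) x :
  peval (\prod_(i <- l) F i) T x = foldr (fun i h => peval (F i) T \o h) id l x.
Proof. by elim: l x => [|i l IH] x; rewrite ?big_nil ?peval1 // big_cons pevalM IH. Qed.

Lemma peval_comp {k : nat} (S : 'I_k -> H -> H) (lq : k.-tuple {mpoly R[i][n]})
    (f : {mpoly R[i][k]}) x :
  (forall j y, peval (tnth lq j) T y = S j y) -> peval (f \mPo lq) T x = peval f S x.
Proof.
move=> lqS; elim/mpolyind: f x => [|c a f _ _ IH] x.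
  by rewrite comp_mpoly0 !peval0.
rewrite comp_mpolyD comp_mpolyZ !pevalDZ IH comp_mpolyX peval_prod pevalX.
congr (c *: _ + _); rewrite /mono_op [index_enum _]unlock -enumT.
elim: (enum 'I_k) x => [|j l IHl] x //=.
by rewrite pevalXn IHl; apply: eq_iter => y; apply: lqS.
Qed.
End CommutingLinear.
End PolynomialCalculus.

Lemma commuting_tuple_scale (R : realType) (H : normedModType R[i]) (n k : nat)
    (c : 'I_k -> R[i]) (sigma : 'I_k -> 'I_n) (T : 'I_n -> H -> H) :
  commuting_tuple T -> commuting_tuple (fun j x => c j *: T (sigma j) x).
Proof.
move=> [T_bounded T_commute]; split=> [j | i j x].
  have [T_linear [M T_le]] := T_bounded (sigma j); split.
    by move=> a x y; rewrite T_linear scalerDr !scalerA mulrC.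
  by exists (`|c j| * M) => x; rewrite normrZ -mulrA ler_wpM2l.
have scaleT l y a : T (sigma l) (a *: y) = a *: T (sigma l) y.
  by apply: GRing.scalable_linear; case: (T_bounded (sigma l)).
by rewrite /= !scaleT !scalerA mulrC T_commute.
Qed.

Lemma K_contraction_subst (R : realType) (H : normedModType R[i]) (n k : nat)
    (K : set ('I_n -> R[i])) (L : set ('I_k -> R[i]))
    (c : 'I_k -> R[i]) (sigma : 'I_k -> 'I_n) (T : 'I_n -> H -> H) :
  (forall w, K w -> L (fun j => c j * w (sigma j))) ->
  K_contraction K T -> K_contraction L (fun j x => c j *: T (sigma j) x).
Proof.
move=> KL [T_tuple T_contr]; split; first exact: commuting_tuple_scale.
have [T_bounded T_commute] := T_tuple.
have T_linear l : linear (T l) by case: (T_bounded l).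
move=> f M f_le x; pose lq := [tuple c j *: 'X_(sigma j) | j < k].
rewrite -(@peval_comp _ _ _ T T_linear T_commute _ _ lq f x) => [|j y]; last first.
  by rewrite tnth_mktuple pevalZ pevalXU.
apply: T_contr => w /KL Lw; rewrite comp_mpoly_meval; apply: f_le.
suff -> : (fun j => (tnth lq j).@[w]) = (fun j => c j * w (sigma j)) by [].
by apply/funext => j; rewrite tnth_mktuple mevalZ mevalXU.
Qed.

Lemma esymE (R : realType) (k l : nat) (w : 'I_k -> R[i]) :
  Defs.esym l w = (mesym k R[i] l).@[w].
Proof.
rewrite /mesym rmorph_sum; apply: eq_bigr => S _; rewrite rmorph_prod.
by apply: eq_bigr => j _; rewrite /= mevalXU.
Qed.

Lemma Gamma_scaled_theta (R : realType) (m p k : nat) (le_k : (k <= k.+1)%N)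
    (z : 'I_k.+1 -> R[i]) :
  cpolydisc z -> Gamma (fun j : 'I_k => gammaj R k.+1 j * theta m p z (widen_ord le_k j)).
Proof.
move=> z_le1; have zm_le1 i : `|z i ^+ m| <= 1 by rewrite normrX exprn_ile1.
have [u u_le1 u_mesym] := critical_points_mesym _ zm_le1.
exists u => //; apply/funext => j.
by rewrite /symmap /theta /gammaj /= ltnS ltn_ord subSS !esymE u_mesym.
Qed.

Theorem lemma2p7 (R : realType) (H : completeNormedModType R[i])
  (ip : H -> H -> R[i]) (Hip : hilbert_ip ip)
  (m p n : nat) (hm : (0 < m)%N) (hp : (0 < p)%N) (hpm : (p %| m)%N) (hn : (1 < n)%N)
  (T : 'I_n -> H -> H) :
  K_contraction (@Theta_bar R m p n) T ->
  K_contraction (@Gamma R n.-1)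
    (fun (j : 'I_n.-1) (x : H) => gammaj R n j *: T (widen_ord (leq_pred n) j) x).
Proof.
(* Only theta_1, ..., theta_(n-1) enter. *)
case: n hn T => [|k] // _ T; apply: K_contraction_subst => _ [z z_le1 <-].
exact: Gamma_scaled_theta.
Qed.
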